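(* The parameterized problems \textsc{Tree Deletion Set}[vc] and \textsc{Tree Deletion Set}[tds] do not admit a boundaried kernelization (of any computable size $f$). More specifically, for a single-vertex boundary $B=\{x\}$, the relation $\equiv_{\textsc{TDS},B}$ has infinitely many equivalence classes both when restricted to $B$-boundaried graphs $G_B$ with $G-B$ edgeless and when restricted to $B$-boundaried graphs $G_B$ with $G-B$ a tree.
   Context: A boundaried graph $G_B$ is a finite simple graph $G$ together with a set $B\subseteq V(G)$ (the boundary). For boundaried graphs $G_B$ and $H_C$ with $V(G)\cap V(H)\subseteq B\cap C$, the gluing $G_B\oplus H_C$ is the simple graph obtained from the disjoint union of $G$ and $H$ by identifying each vertex of $B\cap C$ in $G$ with the identically named vertex in $H$ (an edge present in both is kept once). For an isomorphism-invariant optimization problem $\Pi$ on graphs with optimum value $\mathrm{OPT}_\Pi(G)$, two $B$-boundaried graphs $G_B,G'_B$ are gluing equivalent w.r.t. $\Pi$ and $B$, written $G_B\equiv_{\Pi,B}G'_B$, if there is $\Delta\in\mathbb{Z}$ with $\mathrm{OPT}_\Pi(G_B\oplus H_B)=\mathrm{OPT}_\Pi(G'_B\oplus H_B)+\Delta$ for every boundaried graph $H_B$. For a pure graph minimization problem $\rho$, a $\rho$-solution of $G$ is a feasible solution $s$ with value $\rho(G,s)$. For computable $f$, a boundaried kernelization of size $f$ for $\Pi[\rho]$ is a polynomial-time algorithm that, given a boundaried graph $G_B$ and a $\rho$-solution $s$ of $G$, outputs a boundaried graph $G'_B$ with $G_B\equiv_{\Pi,B}G'_B$, a $\rho$-solution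 $s'$ of $G'$ with $|G'|,|s'|,\rho(G',s')\le f(|B|+\rho(G,s))$ (encoding sizes), and an integer $\Delta$ with $\mathrm{OPT}_\Pi(G_B\oplus H_B)=\mathrm{OPT}_\Pi(G'_B\oplus H_B)+\Delta$ for all $H_B$. \textsc{Tree Deletion Set} (tds, TDS) is the minimization problem whose feasible solutions on $G$ are sets $S\subseteq V(G)$ such that $G-S$ is a tree, with value $|S|$. \textsc{Vertex Cover} (vc) is the minimization problem with feasible solutions $S\subseteq V(G)$ such that $G-S$ is edgeless, value $|S|$. $\Pi$[vc], $\Pi$[tds] denote $\rho=$ \textsc{Vertex Cover}, resp. $\rho=$ \textsc{Tree Deletion Set}. *)

From mathcomp Require Import all_boot all_order all_algebra.
From mathcomp Require Import finmap.
From Stdlib Require Import Relation_Operators.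

Set Implicit Arguments.
Unset Strict Implicit.
Unset Printing Implicit Defensive.

Local Open Scope fset_scope.

Record graph (T : choiceType) := Graph { gV : {fset T}; gE : {fset {fset T}} }.

Definition wf_graph (T : choiceType) (G : graph T) : Prop :=
  forall e, e \in gE G -> (e `<=` gV G) /\ #|` e| = 2.

Definition adj (T : choiceType) (G : graph T) : rel T :=
  fun u v => [fset u; v] \in gE G.

Definition del (T : choiceType) (G : graph T) (S : {fset T}) : graph T :=
  Graph (gV G `\` S) [fset e in gE G | e `&` S == fset0].

Definition connected (T : choiceType) (G : graph T) : Prop :=
  forall u v, u \in gV G -> v \in gV G -> clos_refl_trans T (fun a b => adj G a b) u v.

Definition acyclic (T : choiceType) (G : graph T) : Prop :=
  forall s : seq T, uniq s -> 3 <= size s -> ~~ cycle (adj G) s.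

Definition is_tree (T : choiceType) (G : graph T) : Prop :=
  gV G != fset0 /\ connected G /\ acyclic G.

Definition edgeless (T : choiceType) (G : graph T) : Prop := gE G = fset0.

Definition tds_feasible (T : choiceType) (G : graph T) (S : {fset T}) : Prop :=
  S `<=` gV G /\ is_tree (del G S).

Definition vc_feasible (T : choiceType) (G : graph T) (S : {fset T}) : Prop :=
  S `<=` gV G /\ edgeless (del G S).

(* k is the optimum value OPT_TDS(G) (undefined when no feasible solution). *)
Definition is_opt_tds (T : choiceType) (G : graph T) (k : nat) : Prop :=
  (exists S, tds_feasible G S /\ #|` S| = k) /\
  (forall S, tds_feasible G S -> k <= #|` S|).

Record bgraph := BGraph { bG : graph nat; bB : {fset nat} }.

Definition wf_bgraph (G : bgraph) : Prop :=
  wf_graph (bG G) /\ bB G `<=` gV (bG G).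

(* Gluing G_B (+) H_C: disjoint union of G and H in which exactly the vertices
   of B :&: C are identified (by name).  Shared vertices are tagged [inl v];
   the other vertices of G are [inr (false, v)], those of H [inr (true, v)]. *)
Definition glue_tag (BC : {fset nat}) (side : bool) (v : nat) : nat + (bool * nat) :=
  if v \in BC then inl v else inr (side, v).

Definition glue_side (BC : {fset nat}) (side : bool) (G : graph nat)
  : graph (nat + (bool * nat))%type :=
  Graph [fset glue_tag BC side v | v in gV G]
        [fset [fset glue_tag BC side v | v in (e : {fset nat})] | e in gE G].

Definition glue (G H : bgraph) : graph (nat + (bool * nat))%type :=
  let BC := bB G `&` bB H in
  Graph (gV (glue_side BC false (bG G)) `|` gV (glue_side BC true (bG H)))
        (gE (glue_side BC false (bG G)) `|` gE (glue_side BC true (bG H))).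

(* OPT(G (+) H) = OPT(G' (+) H) + D  (as partial values: both undefined, or
   both defined and related by D). *)
Definition opt_shift (G G' H : bgraph) (D : int) : Prop :=
  (forall k, is_opt_tds (glue G H) k ->
     exists k', is_opt_tds (glue G' H) k' /\ (k%:Z = k'%:Z + D)%R) /\
  (forall k', is_opt_tds (glue G' H) k' ->
     exists k, is_opt_tds (glue G H) k /\ (k%:Z = k'%:Z + D)%R).

Definition glue_equiv (B : {fset nat}) (G G' : bgraph) : Prop :=
  bB G = B /\ bB G' = B /\
  exists D : int, forall H, wf_bgraph H -> bB H = B -> opt_shift G G' H D.

(* Boundaried kernelization of size f for TDS[rho] (rho given by its feasibility
   predicate; the value of a solution is its cardinality), as an arbitrary
   function (no running-time requirement). *)
Definition bkernel (rho : graph nat -> {fset nat} -> Prop) (f : nat -> nat)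
  (K : bgraph -> {fset nat} -> bgraph * {fset nat} * int) : Prop :=
  forall G s, wf_bgraph G -> rho (bG G) s ->
    let: (G', s', D) := K G s in
    wf_bgraph G' /\ bB G' = bB G /\ rho (bG G') s' /\
    glue_equiv (bB G) G G' /\
    (#|` gV (bG G')| + #|` gE (bG G')|)%N <= f (#|` bB G| + #|` s|)%N /\
    #|` s'| <= f (#|` bB G| + #|` s|)%N /\
    (forall H, wf_bgraph H -> bB H = bB G -> opt_shift G G' H D).

Definition infinitely_many_classes (B : {fset nat}) (P : bgraph -> Prop) : Prop :=
  exists Gs : nat -> bgraph,
    (forall i, wf_bgraph (Gs i) /\ bB (Gs i) = B /\ P (Gs i)) /\
    (forall i j, i <> j -> ~ glue_equiv B (Gs i) (Gs j)).

From mathcomp Require Import all_boot all_order all_algebra.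
From mathcomp Require Import finmap zify.
From Stdlib Require Import Relation_Operators.

Set Implicit Arguments.
Unset Strict Implicit.
Unset Printing Implicit Defensive.

Local Open Scope fset_scope.

(* Stars separate the classes.  Glue a star [G] with boundary {x} either to
   the bare vertex x, where G (+) H is again a star and OPT = 0, or to an
   isolated x next to a disjoint star with m + 1 vertices: a remaining tree
   cannot meet both sides, so OPT = min (|V(G)|, m + 1).  The first test fixes
   the shift to 0, the second then recovers |V(G)|, so stars of different
   sizes are inequivalent.  A kernel would have to shrink a star with
   f (1 + |s|) leaves below its own size, contradicting the second test. *)

Section Stars.

Variable T : choiceType.
Implicit Types (G : graph T) (c : T) (S L : {fset T}).

Definition star_at G c : Prop :=
  [/\ c \in gV G, forall v, v \in gV G -> v != c -> adj G c v
    & forall e, e \in gE G -> c \in e].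

Lemma adj_sym G u v : adj G u v -> adj G v u.
Proof. by rewrite /adj fsetUC. Qed.

Lemma adj_del G S u v : adj (del G S) u v -> adj G u v.
Proof. by rewrite /adj inE => /andP []. Qed.

Lemma star_at_adj G c u v : star_at G c -> adj G u v -> u = c \/ v = c.
Proof. by move=> [_ _ Hc] /Hc /fset2P [->|->]; [left|right]. Qed.

Lemma star_at_connected G c : star_at G c -> connected G.
Proof.
move=> [_ Hadj _] u v Hu Hv.
have to_c w : w \in gV G -> clos_refl_trans T (adj G) w c.
  move=> Hw; case: (eqVneq w c) => [->|ne]; first exact: rt_refl.
  by apply/rt_step/adj_sym; apply: Hadj.
apply: rt_trans (to_c _ Hu) _; case: (eqVneq v c) => [->|ne]; first exact: rt_refl.
by apply: rt_step; apply: Hadj.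
Qed.

(* In a cycle a, b, d, ... the edges ab and bd both contain the center and
   a <> d, so b is the center; but the closing edge into a avoids b. *)
Lemma star_at_acyclic G c : star_at G c -> acyclic G.
Proof.
move=> St [|a [|b [|d t]]] //= Hu _.
apply/negP; rewrite /cycle /= rcons_path /= => /and4P [Hab Hbd _ Hla].
move: Hu => /and4P [Ha Hbn _ _].
have nab : a != b by apply: contraNneq Ha => ->; rewrite inE eqxx.
have nad : a != d by apply: contraNneq Ha => ->; rewrite !inE eqxx orbT.
have Hb : b = c.
  have [Ea|//] := star_at_adj St Hab.
  have [//|Ed] := star_at_adj St Hbd.
  by move: nad; rewrite Ea Ed eqxx.
have [Hl|Ea] := star_at_adj St Hla.
- by move: Hbn; rewrite Hb -Hl mem_last.
- by move: nab; rewrite Hb Ea eqxx.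
Qed.

Lemma star_at_is_tree G c : star_at G c -> is_tree G.
Proof.
move=> St; have [Hc _ _] := St; split; last first.
  by split; [apply: star_at_connected St | apply: star_at_acyclic St].
by apply/eqP => E; move: Hc; rewrite E inE.
Qed.

Lemma star_at_del G c S : star_at G c -> c \notin S -> star_at (del G S) c.
Proof.
move=> [Hc Hadj He] cS; split => /=.
- by rewrite inE cS.
- move=> v; rewrite inE => /andP [vS vV] vc.
  rewrite /adj /= inE; apply/andP; split; first exact: Hadj.
  apply/eqP/fsetP => z; rewrite !inE.
  by apply/negbTE/andP => -[/orP [] /eqP -> ]; rewrite (negbTE cS, negbTE vS).
- by move=> e; rewrite inE => /andP [/He].
Qed.

Lemma star_at_del_center_edgeless G c : star_at G c -> edgeless (del G [fset c]).
Proof.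
move=> [_ _ He]; apply/fsetP => e; rewrite !inE; apply/negbTE/andP => -[/He ce].
by move/eqP/fsetP/(_ c); rewrite !inE ce eqxx.
Qed.

Definition star_graph c L : graph T := Graph (c |` L) [fset [fset c; l] | l in L].

Lemma star_graph_star_at c L : star_at (star_graph c L) c.
Proof.
split => /=.
- by rewrite !inE eqxx.
- move=> v; rewrite !inE => /orP [/eqP ->|Hv]; first by rewrite eqxx.
  by move=> _; apply/imfsetP; exists v.
- by move=> e /imfsetP [l _ ->]; rewrite !inE eqxx.
Qed.

Lemma wf_star_graph c L : c \notin L -> wf_graph (star_graph c L).
Proof.
move=> cL e /imfsetP [l /= Hl ->]; split.
  by apply/fsubsetP => z /fset2P [] ->; rewrite !inE ?eqxx ?Hl ?orbT.
rewrite cardfsU1 cardfs1 inE; case: eqVneq => // E.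
by move: cL; rewrite E Hl.
Qed.

Lemma card_star_graph c L : c \notin L -> #|` gV (star_graph c L)| = (#|` L|).+1.
Proof. by move=> cL; rewrite /= cardfsU1 cL. Qed.

End Stars.

Lemma is_opt_tds_uniq (T : choiceType) (G : graph T) k k' :
  is_opt_tds G k -> is_opt_tds G k' -> k = k'.
Proof.
move=> [[S [HS <-]] Hmin] [[S' [HS' <-]] Hmin'].
by apply/eqP; rewrite eqn_leq Hmin // Hmin'.
Qed.

(* [locked] keeps the enumeration from unfolding under [/=]. *)
Definition fset_iota (a n : nat) : {fset nat} := locked [fset k in iota a n].

Lemma fset_iotaP a n k : (k \in fset_iota a n) = (a <= k < a + n).
Proof. by rewrite /fset_iota -lock in_fset /= mem_iota. Qed.

Lemma card_fset_iota a n : #|` fset_iota a n| = n.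
Proof. by rewrite /fset_iota -lock card_fseq undup_id ?iota_uniq // size_iota. Qed.

Lemma pred_notin_fset_iota a n : a \notin fset_iota a.+1 n.
Proof. by rewrite fset_iotaP ltnn. Qed.

Section Gluing.

Variable B : {fset nat}.
Implicit Types (G H : bgraph) (s : bool).

Notation tag := (glue_tag B).

Lemma glue_tag_inj s : injective (tag s).
Proof.
by move=> v w; rewrite /glue_tag; case: (v \in B); case: (w \in B) => // [[]] // [].
Qed.

Lemma glue_tag_boundary s v : v \in B -> tag s v = inl v.
Proof. by rewrite /glue_tag => ->. Qed.

Lemma glue_tag_private s v : v \notin B -> tag s v = inr (s, v).
Proof. by rewrite /glue_tag => /negbTE ->. Qed.

Lemma glue_tag_sides v w : tag false v = tag true w -> v = w /\ v \in B.
Proof. by rewrite /glue_tag; case: ifP; case: ifP => // vB _ [->]. Qed.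

Lemma card_glue_tag s (A : {fset nat}) : #|` [fset tag s v | v in A]| = #|` A|.
Proof. by apply/eqP/card_in_imfsetP => a b _ _; apply: glue_tag_inj. Qed.

Lemma glueE G H : bB G = B -> bB H = B ->
  glue G H = Graph
    ([fset tag false v | v in gV (bG G)] `|` [fset tag true v | v in gV (bG H)])
    ([fset [fset tag false v | v in (e : {fset nat})] | e in gE (bG G)] `|`
     [fset [fset tag true v | v in (e : {fset nat})] | e in gE (bG H)]).
Proof. by move=> GB HB; rewrite /glue GB HB fsetIid. Qed.

Definition right_private (v : nat + (bool * nat)) : bool :=
  if v is inr (s, _) then s else false.

Lemma right_private_left v : right_private (tag false v) = false.
Proof. by rewrite /glue_tag; case: ifP. Qed.

Section DetachedRight.

Variables G H : bgraph.
Hypotheses (GB : bB G = B) (HB : bB H = B).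
Hypothesis H_avoids_B : forall e, e \in gE (bG H) -> e `&` B = fset0.

Lemma adj_glue_right_private u v :
  adj (glue G H) u v -> right_private u = right_private v.
Proof.
rewrite /adj glueE //.
have [uin vin] : u \in [fset u; v] /\ v \in [fset u; v] by rewrite !inE !eqxx orbT.
move: uin vin; move: [fset u; v] => e uin vin.
rewrite inE => /orP [] /imfsetP [e0 /= He0 Ee]; subst e.
- by move: uin vin => /imfsetP [w1 _ ->] /imfsetP [w2 _ ->]; rewrite !right_private_left.
- have notB w : w \in e0 -> w \notin B.
    move=> w0; apply: contra_eqN (H_avoids_B He0) => wB.
    by apply/fset0Pn; exists w; rewrite inE w0.
  move: uin vin => /imfsetP [w1 /= /notB n1 ->] /imfsetP [w2 /= /notB n2 ->].
  by rewrite !glue_tag_private.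
Qed.

(* No edge of [H] meets the boundary, so a connected remainder lies entirely
   on one side: a tree deletion set must swallow all of [G] or of [H - B]. *)
Lemma glue_tds_card_lb S : tds_feasible (glue G H) S ->
  #|` gV (bG G)| <= #|` S| \/ #|` gV (bG H) `\` B| <= #|` S|.
Proof.
move=> [_ [_ [conn _]]].
have side_const a b : clos_refl_trans _ (adj (del (glue G H) S)) a b ->
    right_private a = right_private b.
  elim=> [u v /adj_del /adj_glue_right_private //| // | u v w _ -> _ ->] //.
have [GS|] := boolP ([fset tag false v | v in gV (bG G)] `<=` S).
  by left; rewrite -(card_glue_tag false); apply: fsubset_leq_card.
move=> /fsubsetPn [u /imfsetP [w /= Hw ->] uS]; right.
rewrite -(card_glue_tag true); apply: fsubset_leq_card.
apply/fsubsetP => _ /imfsetP [w' /= /[!inE] /andP [w'B Hw'] ->].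
apply/negPn/negP => w'S.
have uV : tag false w \in gV (del (glue G H) S).
  by rewrite glueE //= !inE uS in_imfset.
have w'V : tag true w' \in gV (del (glue G H) S).
  by rewrite glueE //= !inE w'S [X in _ || X]in_imfset ?orbT.
have := side_const _ _ (conn _ _ uV w'V).
by rewrite right_private_left glue_tag_private.
Qed.

End DetachedRight.

(* Deleting all of [G] from the gluing leaves a copy of [H - B]. *)
Lemma glue_del_left_star_at G H c : wf_bgraph G -> bB G = B -> bB H = B ->
  star_at (del (bG H) B) c ->
  star_at (del (glue G H) [fset tag false v | v in gV (bG G)]) (tag true c).
Proof.
move=> [WE WB] GB HB [Hc Hadj He].
set S := [fset tag false v | v in gV (bG G)].
have tag_right_in_S v : (tag true v \in S) = (v \in B).
  apply/imfsetP/idP => [[w _ /esym/glue_tag_sides [-> //]] | vB].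
  by exists v; [apply: (fsubsetP WB); rewrite GB | rewrite !glue_tag_boundary].
move: Hc; rewrite /= !inE => /andP [cB cH].
rewrite glueE //; split => /=.
- by rewrite !inE tag_right_in_S cB /= [X in _ || X]in_imfset ?orbT.
- move=> v; rewrite !inE => /andP [vS /orP [vG|]]; first by rewrite vG in vS.
  move=> /imfsetP [w /= Hw Ev] vc; rewrite {}Ev tag_right_in_S in vS vc *.
  have wc : w != c by apply: contraNneq vc => ->.
  have : adj (del (bG H) B) c w by apply: Hadj; rewrite // inE vS.
  rewrite /adj inE => /andP [cwE cwB].
  rewrite /adj /= inE -imfset_fset2; apply/andP; split.
    by apply/fsetUP; right; apply: in_imfset.
  apply/eqP/fsetP => z; rewrite imfset_fset2 !inE.
  apply/negbTE/andP => -[/orP [] /eqP -> ].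
  + by rewrite tag_right_in_S (negbTE cB).
  + by rewrite tag_right_in_S (negbTE vS).
- move=> e; rewrite !inE => /andP [/orP [] /imfsetP [e0 /= He0 ->] /eqP/fsetP disj].
  + have [sub card2] := WE _ He0.
    have /fset0Pn [w we0] : e0 != fset0 by rewrite -cardfs_eq0 card2.
    move: (disj (tag false w)); rewrite !inE in_imfset //= in_imfset //=.
    exact: (fsubsetP sub).
  + have e0B : e0 `&` B == fset0.
      apply/eqP/fsetP => w; rewrite !inE; apply/negbTE/andP => -[we0 wB].
      by move: (disj (tag true w)); rewrite !inE tag_right_in_S wB in_imfset.
    have /He ce0 : e0 \in gE (del (bG H) B) by rewrite inE; apply/andP.
    exact: in_imfset.
Qed.

Lemma glue_left_tds_feasible G H c : wf_bgraph G -> bB G = B -> bB H = B ->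
  star_at (del (bG H) B) c ->
  tds_feasible (glue G H) [fset tag false v | v in gV (bG G)].
Proof.
move=> WG GB HB Hstar; split; first by rewrite glueE //= fsubsetUl.
exact: star_at_is_tree (glue_del_left_star_at WG GB HB Hstar).
Qed.

Definition boundary_bgraph : bgraph := BGraph (Graph B fset0) B.

Lemma wf_boundary_bgraph : wf_bgraph boundary_bgraph.
Proof. by split => //= e; rewrite inE. Qed.

Lemma glue_boundary_star_at G c : wf_bgraph G -> bB G = B -> star_at (bG G) c ->
  star_at (glue G boundary_bgraph) (tag false c).
Proof.
move=> [_ WB] GB [Hc Hadj He]; rewrite glueE //.
have boundary_left u : u \in [fset tag true v | v in B] ->
    u \in [fset tag false v | v in gV (bG G)].
  move=> /imfsetP [b /= bB ->]; rewrite glue_tag_boundary // -(glue_tag_boundary false bB).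
  by apply: in_imfset; apply: (fsubsetP WB); rewrite GB.
split => /=.
- by rewrite inE in_imfset.
- move=> v vV vc.
  have /imfsetP [w /= Hw Ev] : v \in [fset tag false v | v in gV (bG G)].
    by case/fsetUP: vV => // /boundary_left.
  have wc : w != c by apply: contraNneq vc; rewrite Ev => ->.
  by rewrite Ev /adj /= -imfset_fset2 inE in_imfset //=; apply: Hadj.
- move=> e /fsetUP [] /imfsetP [e0 /= He0 ->]; first exact/in_imfset/He.
  by move: He0; rewrite inE.
Qed.

Lemma opt_glue_boundary_star G c : wf_bgraph G -> bB G = B -> star_at (bG G) c ->
  is_opt_tds (glue G boundary_bgraph) 0.
Proof.
move=> WG GB Hstar; split => //; exists fset0; split => //; split; first exact: fsub0set.
apply: (@star_at_is_tree _ _ (tag false c)); apply: star_at_del; last by rewrite inE.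
exact: glue_boundary_star_at.
Qed.

End Gluing.

Definition detached_star (x m : nat) : bgraph :=
  BGraph (Graph (x |` gV (star_graph x.+1 (fset_iota x.+2 m)))
                (gE (star_graph x.+1 (fset_iota x.+2 m))))
         [fset x].

Lemma detached_star_edges_avoid x m e :
  e \in gE (bG (detached_star x m)) -> e `&` [fset x] = fset0.
Proof.
move=> /imfsetP [l /=]; rewrite fset_iotaP => /andP [xl _] ->.
by apply/fsetP => z; rewrite !inE; apply/negbTE/andP => -[/orP [] /eqP -> /eqP]; lia.
Qed.

Lemma wf_detached_star x m : wf_bgraph (detached_star x m).
Proof.
split => /=; last by rewrite fsub1set !inE eqxx.
move=> e /(wf_star_graph (pred_notin_fset_iota x.+1 m)) [sub card2]; split => //.
exact: fsubset_trans sub (fsubsetU1 _ _).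
Qed.

Lemma del_detached_star x m :
  del (bG (detached_star x m)) [fset x] = star_graph x.+1 (fset_iota x.+2 m).
Proof.
rewrite /del /=; congr Graph.
- by apply/fsetP => z; rewrite !inE fset_iotaP; case: (eqVneq z x) => [->|//]; lia.
- apply/fsetP => e; rewrite inE; apply/andP/idP => [[] //|eE]; split=> //.
  by rewrite (detached_star_edges_avoid eE).
Qed.

Lemma card_detached_star_private x m :
  #|` gV (bG (detached_star x m)) `\` [fset x]| = m.+1.
Proof.
have := congr1 (fun G => #|` gV G|) (del_detached_star x m).
by rewrite card_star_graph ?pred_notin_fset_iota // card_fset_iota.
Qed.

Lemma glue_detached_star_left_tds_feasible x m G : wf_bgraph G -> bB G = [fset x] ->
  tds_feasible (glue G (detached_star x m)) [fset glue_tag [fset x] false v | v in gV (bG G)].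
Proof.
move=> WG GB; apply: (glue_left_tds_feasible (c := x.+1) WG GB) => //.
by rewrite del_detached_star; apply: star_graph_star_at.
Qed.

Lemma opt_glue_detached_star x m G : wf_bgraph G -> bB G = [fset x] ->
  #|` gV (bG G)| <= m.+1 -> is_opt_tds (glue G (detached_star x m)) #|` gV (bG G)|.
Proof.
move=> WG GB Gm; split.
  exists [fset glue_tag [fset x] false v | v in gV (bG G)].
  by split; [apply: glue_detached_star_left_tds_feasible | apply: card_glue_tag].
have avoid := @detached_star_edges_avoid x m.
move=> S /(glue_tds_card_lb GB (erefl : bB (detached_star x m) = _) avoid) [//|].
by rewrite card_detached_star_private; apply: leq_trans.
Qed.

Lemma opt_glue_detached_star_le x m G k : wf_bgraph G -> bB G = [fset x] ->
  is_opt_tds (glue G (detached_star x m)) k -> k <= #|` gV (bG G)|.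
Proof.
move=> WG GB [_ Hmin]; rewrite -(card_glue_tag [fset x] false).
exact/Hmin/glue_detached_star_left_tds_feasible.
Qed.

(* Gluing the bare boundary vertex yields stars on both sides, which forces
   the shift to vanish; gluing a large detached star then reads off the
   number of vertices. *)
Lemma glue_equiv_star_card x G1 G2 c1 c2 :
  wf_bgraph G1 -> wf_bgraph G2 -> bB G1 = [fset x] -> bB G2 = [fset x] ->
  star_at (bG G1) c1 -> star_at (bG G2) c2 ->
  glue_equiv [fset x] G1 G2 -> #|` gV (bG G1)| = #|` gV (bG G2)|.
Proof.
move=> W1 W2 B1 B2 S1 S2 [_ [_ [D shift]]].
have [to_G2 _] := shift _ (wf_boundary_bgraph [fset x]) erefl.
have [k [opt_k zero_shift]] := to_G2 0 (opt_glue_boundary_star W1 B1 S1).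
rewrite (is_opt_tds_uniq opt_k (opt_glue_boundary_star W2 B2 S2)) in zero_shift.
set m := (#|` gV (bG G1)| + #|` gV (bG G2)|)%N.
have [to_G2' _] := shift _ (wf_detached_star x m) erefl.
have m1 : #|` gV (bG G1)| <= m.+1 by rewrite /m; lia.
have m2 : #|` gV (bG G2)| <= m.+1 by rewrite /m; lia.
have [k' [opt_k' card_shift]] := to_G2' _ (opt_glue_detached_star W1 B1 m1).
rewrite (is_opt_tds_uniq opt_k' (opt_glue_detached_star W2 B2 m2)) in card_shift.
lia.
Qed.

Lemma stars_infinitely_many_classes x P (Gs : nat -> bgraph) (c : nat -> nat) :
  (forall n, [/\ wf_bgraph (Gs n), bB (Gs n) = [fset x],
                 star_at (bG (Gs n)) (c n) & P (Gs n)]) ->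
  injective (fun n => #|` gV (bG (Gs n))|) ->
  infinitely_many_classes [fset x] P.
Proof.
move=> HGs card_inj; exists Gs; split; first by move=> n; have [] := HGs n.
move=> i j ij eq_ij; apply/ij/card_inj.
have [Wi Bi Si _] := HGs i; have [Wj Bj Sj _] := HGs j.
exact: glue_equiv_star_card Wi Wj Bi Bj Si Sj eq_ij.
Qed.

Definition center_star (x n : nat) : bgraph :=
  BGraph (star_graph x (fset_iota x.+1 n)) [fset x].

Definition leaf_star (x n : nat) : bgraph :=
  BGraph (star_graph x.+1 (x |` fset_iota x.+2 n)) [fset x].

Lemma leaf_star_center_notin x n : x.+1 \notin x |` fset_iota x.+2 n.
Proof. by rewrite !inE fset_iotaP; lia. Qed.

Lemma wf_center_star x n : wf_bgraph (center_star x n).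
Proof.
split; last by rewrite /= fsub1set !inE eqxx.
exact/wf_star_graph/pred_notin_fset_iota.
Qed.

Lemma wf_leaf_star x n : wf_bgraph (leaf_star x n).
Proof.
split; last by rewrite /= fsub1set !inE eqxx orbT.
exact/wf_star_graph/leaf_star_center_notin.
Qed.

Lemma card_center_star x n : #|` gV (bG (center_star x n))| = n.+1.
Proof. by rewrite card_star_graph ?pred_notin_fset_iota // card_fset_iota. Qed.

Lemma card_leaf_star x n : #|` gV (bG (leaf_star x n))| = n.+2.
Proof.
rewrite card_star_graph ?leaf_star_center_notin // cardfsU1 card_fset_iota.
by rewrite fset_iotaP; case: leqP; lia.
Qed.

(* The kernel would have to replace [center_star 0 n], [n := f (1 + #|s|)],
   by a graph [G'] with at most [n] vertices.  The bare boundary shows that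
   the shift is nonpositive, while gluing the detached star with [n] leaves
   gives OPT [n + 1] on the original side but at most [#|V(G')|] on the other. *)
Lemma no_bkernel_of_star_solution rho f s K :
  (forall n, rho (bG (center_star 0 n)) s) -> ~ bkernel rho f K.
Proof.
move=> sol kernel; set n := f (1 + #|` s|)%N.
have := kernel (center_star 0 n) s (wf_center_star 0 n) (sol n).
case: (K (center_star 0 n) s) => [[G' s'] D] /=.
move=> [WG' [G'B [_ [_ [G'small [_ shift]]]]]].
have [to_G' _] := shift _ (wf_boundary_bgraph [fset 0]) erefl.
have [k [_ nonpos_shift]] :=
  to_G' 0 (opt_glue_boundary_star (wf_center_star 0 n) erefl (star_graph_star_at _ _)).
have [to_G'' _] := shift _ (wf_detached_star 0 n) erefl.
have n_le : #|` gV (bG (center_star 0 n))| <= n.+1 by rewrite card_center_star.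
have [k' [opt_k' card_shift]] :=
  to_G'' _ (opt_glue_detached_star (wf_center_star 0 n) erefl n_le).
have := opt_glue_detached_star_le WG' G'B opt_k'.
move: G'small card_shift; rewrite card_center_star cardfs1 -/n.
clearbody n; move: #|` gV (bG G')| #|` gE (bG G')| => a b; lia.
Qed.

Theorem mainTheorem12 :
  (forall f : nat -> nat, ~ exists K, bkernel (@vc_feasible nat) f K) /\
  (forall f : nat -> nat, ~ exists K, bkernel (@tds_feasible nat) f K) /\
  (forall x : nat,
     infinitely_many_classes [fset x]
       (fun G => edgeless (del (bG G) [fset x])) /\
     infinitely_many_classes [fset x]
       (fun G => is_tree (del (bG G) [fset x]))).
Proof.
split; [|split].
- move=> f [K]; apply: (@no_bkernel_of_star_solution _ _ [fset 0]) => n.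
  split; first by rewrite fsub1set !inE eqxx.
  exact/star_at_del_center_edgeless/star_graph_star_at.
- move=> f [K]; apply: (@no_bkernel_of_star_solution _ _ fset0) => n.
  split; first exact: fsub0set.
  apply: (star_at_is_tree (c := 0)); apply: star_at_del; last by rewrite inE.
  exact: star_graph_star_at.
- move=> x; split.
  + apply: (@stars_infinitely_many_classes _ _ (center_star x) (fun=> x)).
      move=> n; split; [exact: wf_center_star | by [] | exact: star_graph_star_at |].
      exact/star_at_del_center_edgeless/star_graph_star_at.
    by move=> i j /=; rewrite !card_center_star => -[].
  + apply: (@stars_infinitely_many_classes _ _ (leaf_star x) (fun=> x.+1)).
      move=> n; split; [exact: wf_leaf_star | by [] | exact: star_graph_star_at |].
      apply: (star_at_is_tree (c := x.+1)); apply: star_at_del.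
        exact: star_graph_star_at.
      by rewrite inE; apply/eqP; lia.
    by move=> i j /=; rewrite !card_leaf_star => -[].
Qed.
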